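(* Let $A\in\mathbb{R}^{m_A\times n}$, $B\in\mathbb{R}^{m_B\times n}$, $b\in\mathbb{R}^{m_A}$, $d\in\mathbb{R}^{m_B}$, with $\operatorname{rk}\begin{pmatrix}A\\ B\end{pmatrix}=n$. Let $P=\{x\in\mathbb{R}^n: Ax=b,\ Bx\le d\}$, $M=\begin{pmatrix}A&0\\ B&I_{m_B}\end{pmatrix}$, $q=\begin{pmatrix}b\\ d\end{pmatrix}$, $\bar W=\ker(M)\subseteq\mathbb{R}^{n+m_B}$, $\bar P=\{(x,s)\in\mathbb{R}^n\times\mathbb{R}^{m_B}: M(x,s)=q,\ s\ge\mathbb{0}\}$, $W=\{s: (x,s)\in\bar W \text{ for some } x\}$, and $Q=\{s:(x,s)\in\bar P\text{ for some }x\}$. Then: (1) there is an invertible affine bijection $\psi: Q\to P$ defined by $M(\psi(s),s)=q$; (2) $g\in\mathbb{R}^n$ is an elementary vector in the sense that $g\in\ker(A)$ and $Bg$ is support-minimal in $\{By: y\in\ker(A),\ y\ne\mathbb{0}\}$ if and only if there exists $h\in\mathbb{R}^{m_B}$ with $(g,h)\in\bar W$, $h\ne\mathbb{0}$, and $h$ support-minimal among nonzero vectors of $W$; (3) for such a pair $(g,h)\in\bar W$ and any $s\in Q$, letting $s'=\operatorname{aug}_Q(s,h)$, we have $\psi(s')=\operatorname{aug}_P(\psi(s),g)$.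
   Context: For a polyhedron $R$, a point $x\in R$ and a direction $g$, $\operatorname{aug}_R(x,g)=x+\alpha g$ with $\alpha=\max\{\bar\alpha: x+\bar\alpha g\in R\}$ (the maximal step along $g$). Support-minimal in a set means no nonzero element of the set has strictly smaller support. *)

(* Column vectors 'cV[R]_k; R : realFieldType (ordered field; R = reals is an instance). *)
From HB Require Import structures.
From mathcomp Require Import all_boot all_order all_algebra.
Set Implicit Arguments. Unset Strict Implicit. Unset Printing Implicit Defensive.
Import Order.TTheory GRing.Theory Num.Theory.
Local Open Scope ring_scope.

Section Defs.
Variable R : realFieldType.

Definition polyhedronP (n mA mB : nat) (A : 'M[R]_(mA, n)) (B : 'M[R]_(mB, n))
  (b : 'cV[R]_mA) (d : 'cV[R]_mB) (x : 'cV[R]_n) : Prop :=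
  A *m x = b /\ forall i, (B *m x) i 0 <= d i 0.

Definition Mmat (n mA mB : nat) (A : 'M[R]_(mA, n)) (B : 'M[R]_(mB, n))
  : 'M[R]_(mA + mB, n + mB) := block_mx A 0 B 1%:M.

Definition qvec (mA mB : nat) (b : 'cV[R]_mA) (d : 'cV[R]_mB) : 'cV[R]_(mA + mB) :=
  col_mx b d.

Definition Wbar (n mA mB : nat) (A : 'M[R]_(mA, n)) (B : 'M[R]_(mB, n))
  (x : 'cV[R]_n) (s : 'cV[R]_mB) : Prop :=
  Mmat A B *m col_mx x s = 0.

Definition Pbar (n mA mB : nat) (A : 'M[R]_(mA, n)) (B : 'M[R]_(mB, n))
  (b : 'cV[R]_mA) (d : 'cV[R]_mB) (x : 'cV[R]_n) (s : 'cV[R]_mB) : Prop :=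
  Mmat A B *m col_mx x s = qvec b d /\ forall i, 0 <= s i 0.

Definition Wproj (n mA mB : nat) (A : 'M[R]_(mA, n)) (B : 'M[R]_(mB, n))
  (s : 'cV[R]_mB) : Prop := exists x, Wbar A B x s.

Definition Qproj (n mA mB : nat) (A : 'M[R]_(mA, n)) (B : 'M[R]_(mB, n))
  (b : 'cV[R]_mA) (d : 'cV[R]_mB) (s : 'cV[R]_mB) : Prop := exists x, Pbar A B b d x s.

Definition supp (k : nat) (v : 'cV[R]_k) : {set 'I_k} := [set i | v i 0 != 0].

Definition support_minimal (k : nat) (S : 'cV[R]_k -> Prop) (v : 'cV[R]_k) : Prop :=
  S v /\ ~ (exists w, S w /\ w <> 0 /\ supp w \proper supp v).

Definition elementary (n mA mB : nat) (A : 'M[R]_(mA, n)) (B : 'M[R]_(mB, n))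
  (g : 'cV[R]_n) : Prop :=
  A *m g = 0 /\
  support_minimal (fun v => exists y, A *m y = 0 /\ y <> 0 /\ v = B *m y) (B *m g).

Definition is_aug (k : nat) (Rg : 'cV[R]_k -> Prop) (x g y : 'cV[R]_k) : Prop :=
  exists alpha : R, Rg (x + alpha *: g) /\ y = x + alpha *: g /\
    forall beta : R, Rg (x + beta *: g) -> beta <= alpha.

End Defs.

From HB Require Import structures.
From mathcomp Require Import all_boot all_order all_algebra.
Set Implicit Arguments. Unset Strict Implicit. Unset Printing Implicit Defensive.
Import Order.TTheory GRing.Theory Num.Theory.
Local Open Scope ring_scope.

(* Since [col_mx A B] has full column rank it has a left inverse K, so a point
   x is recovered from (A x, B x) = (b, d - s): psi s = K (b; d - s) is affine,
   with inverse x |-> d - B x.  On the kernel side W = - B (ker A), and B is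
   injective on ker A, so negation is a support-preserving bijection between
   the nonzero vectors of W and { B y : y in ker A, y <> 0 }.  Finally, when
   (g, h) lies in ker M, psi maps the line s + a h onto the line psi s + a g
   and matches membership in Q with membership in P, so the maximal steps
   along both lines coincide. *)

Section SupportMinimal.
Variables (R : realFieldType) (k : nat).

Lemma supp_opp (v : 'cV[R]_k) : supp (- v) = supp v.
Proof. by apply/setP => i; rewrite !inE mxE oppr_eq0. Qed.

Lemma opp_neq0 (v : 'cV[R]_k) : v <> 0 -> - v <> 0.
Proof. by move=> v0 /eqP; rewrite oppr_eq0 => /eqP. Qed.

Lemma support_minimal_ext (S S' : 'cV[R]_k -> Prop) (v : 'cV[R]_k) :
  (forall w, S w <-> S' w) -> support_minimal S v <-> support_minimal S' v.
Proof.
move=> eqS; split=> -[Sv nosmaller]; split; try exact/eqS.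
  by case=> w [/eqS Sw smaller]; apply: nosmaller; exists w.
by case=> w [/eqS Sw smaller]; apply: nosmaller; exists w.
Qed.

Lemma support_minimal_opp (S : 'cV[R]_k -> Prop) (v : 'cV[R]_k) :
  support_minimal S (- v) <-> support_minimal (fun w => S (- w)) v.
Proof.
rewrite /support_minimal supp_opp; split=> -[Sv nosmaller]; split=> //.
  case=> w [Sw [w0 sub]]; apply: nosmaller; exists (- w).
  by rewrite supp_opp; split=> //; split=> //; exact: opp_neq0.
case=> w [Sw [w0 sub]]; apply: nosmaller; exists (- w).
by rewrite opprK supp_opp; split=> //; split=> //; exact: opp_neq0.
Qed.

End SupportMinimal.

Lemma is_aug_transfer (R : realFieldType) (k l : nat)
    (Rs : 'cV[R]_k -> Prop) (Rx : 'cV[R]_l -> Prop) (f : 'cV[R]_k -> 'cV[R]_l)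
    (s h : 'cV[R]_k) (x g : 'cV[R]_l) :
  (forall a, Rs (s + a *: h) <-> Rx (x + a *: g)) ->
  (forall a, f (s + a *: h) = x + a *: g) ->
  (forall s', is_aug Rs s h s' -> is_aug Rx x g (f s')) /\
  (forall x', is_aug Rx x g x' -> exists2 s', is_aug Rs s h s' & f s' = x').
Proof.
move=> eqR fline; split.
  move=> _ [a [Ra [-> amax]]]; exists a; split; first exact/eqR.
  by split; [exact: fline | move=> a' /eqR; exact: amax].
move=> _ [a [Ra [-> amax]]]; exists (s + a *: h); last exact: fline.
by exists a; split; [exact/eqR | split=> // a' /eqR; exact: amax].
Qed.

Section SlackForm.
Variables (R : realFieldType) (n mA mB : nat).
Variables (A : 'M[R]_(mA, n)) (B : 'M[R]_(mB, n)) (b : 'cV[R]_mA) (d : 'cV[R]_mB).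

Lemma Mmat_mul_col (x : 'cV[R]_n) (s : 'cV[R]_mB) :
  Mmat A B *m col_mx x s = col_mx (A *m x) (B *m x + s).
Proof. by rewrite /Mmat mul_block_col mul0mx addr0 mul1mx. Qed.

Lemma PbarP x s :
  Pbar A B b d x s <-> [/\ A *m x = b, B *m x + s = d & forall i, 0 <= s i 0].
Proof.
rewrite /Pbar Mmat_mul_col /qvec; split; first by case=> /eq_col_mx [-> ->].
by case=> -> ->.
Qed.

Lemma WbarP x s : Wbar A B x s <-> A *m x = 0 /\ s = - (B *m x).
Proof.
rewrite /Wbar Mmat_mul_col -col_mx0; split.
  by case/eq_col_mx=> -> /eqP; rewrite addrC addr_eq0 => /eqP.
by case=> -> ->; rewrite subrr.
Qed.

Definition slack_of_point (x : 'cV[R]_n) : 'cV[R]_mB := (- B) *m x + d.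

Lemma Pbar_polyhedronP x s : Pbar A B b d x s -> polyhedronP A B b d x.
Proof. by case/PbarP=> Ax Bxs s_ge0; split=> // i; rewrite -Bxs [leRHS]mxE lerDl. Qed.

Lemma polyhedronP_Pbar x : polyhedronP A B b d x -> Pbar A B b d x (slack_of_point x).
Proof.
rewrite /slack_of_point mulNmx => -[Ax Bx_le]; apply/PbarP.
split=> [||i] //; first by rewrite addNKr.
by rewrite [leRHS]mxE [X in X + _]mxE addrC subr_ge0.
Qed.

Definition AB_linv : 'M[R]_(n, mA + mB) := pinvmx (col_mx A B).
Definition point_of_slack_mx : 'M[R]_(n, mB) := - (AB_linv *m col_mx 0 1%:M).
Definition point_of_slack (s : 'cV[R]_mB) : 'cV[R]_n :=
  point_of_slack_mx *m s + AB_linv *m col_mx b d.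

Lemma point_of_slack_mxE (s : 'cV[R]_mB) :
  point_of_slack_mx *m s = AB_linv *m col_mx 0 (- s).
Proof.
by rewrite mulNmx -mulmxA mul_col_mx mul0mx mul1mx -mulmxN opp_col_mx oppr0.
Qed.

Hypothesis rank_AB : \rank (col_mx A B) = n.

Lemma AB_linvK p (x : 'M[R]_(n, p)) : AB_linv *m col_mx (A *m x) (B *m x) = x.
Proof.
have full : row_full (col_mx A B) by rewrite /row_full rank_AB.
by rewrite -mul_col_mx mulmxA mulVpmx // mul1mx.
Qed.

Lemma kerAB_eq0 p (y : 'M[R]_(n, p)) : A *m y = 0 -> B *m y = 0 -> y = 0.
Proof. by move=> Ay By; rewrite -[y]AB_linvK Ay By col_mx0 mulmx0. Qed.

Lemma point_of_slack_unique x s :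
  A *m x = b -> B *m x + s = d -> point_of_slack s = x.
Proof.
rewrite /point_of_slack point_of_slack_mxE -mulmxDr add_col_mx add0r => <- <-.
by rewrite addrC addrK AB_linvK.
Qed.

Lemma QprojE s : Qproj A B b d s <-> Pbar A B b d (point_of_slack s) s.
Proof.
split; last by exists (point_of_slack s).
by case=> x /[dup] /PbarP[Ax Bxs _]; rewrite (point_of_slack_unique Ax Bxs).
Qed.

Lemma point_of_slackK s :
  Qproj A B b d s -> slack_of_point (point_of_slack s) = s.
Proof. by rewrite /slack_of_point => /QprojE/PbarP[_ <- _]; rewrite mulNmx addKr. Qed.

Lemma Qproj_slack_of_point x : polyhedronP A B b d x -> Qproj A B b d (slack_of_point x).
Proof. by exists x; exact: polyhedronP_Pbar. Qed.

Lemma slack_of_pointK x :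
  polyhedronP A B b d x -> point_of_slack (slack_of_point x) = x.
Proof. by case/polyhedronP_Pbar/PbarP=> Ax Bxs _; exact: point_of_slack_unique. Qed.

Lemma Wproj_neq0P w :
  Wproj A B w /\ w <> 0 <-> exists y, A *m y = 0 /\ y <> 0 /\ - w = B *m y.
Proof.
split.
  case=> -[y /WbarP[Ay ->]] w0; exists y; split=> //; rewrite opprK; split=> // y0.
  by apply: w0; rewrite y0 mulmx0 oppr0.
case=> y [Ay [y0 wE]]; split; first by exists y; apply/WbarP; rewrite -wE opprK.
by move=> w0; apply: y0; apply: kerAB_eq0; rewrite // -wE w0 oppr0.
Qed.

Lemma elementaryP g :
  elementary A B g <->
  exists h, Wbar A B g h /\ h <> 0 /\
    support_minimal (fun w => Wproj A B w /\ w <> 0) h.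
Proof.
have minW v : support_minimal (fun w => Wproj A B w /\ w <> 0) v <->
    support_minimal (fun u => exists y, A *m y = 0 /\ y <> 0 /\ u = B *m y) (- v).
  exact: iff_trans (support_minimal_ext _ Wproj_neq0P) (iff_sym (support_minimal_opp _ _)).
split.
  case=> Ag Bg_min; exists (- (B *m g)).
  have [[_ h0] _] : support_minimal (fun w => Wproj A B w /\ w <> 0) (- (B *m g)).
    by apply/minW; rewrite opprK.
  by split; [apply/WbarP | split=> //; apply/minW; rewrite opprK].
by case=> h [/WbarP[Ag ->] [_ /minW]]; rewrite opprK.
Qed.

Lemma point_of_slack_mx_Wbar g h : Wbar A B g h -> point_of_slack_mx *m h = g.
Proof. by case/WbarP=> Ag ->; rewrite point_of_slack_mxE opprK -Ag AB_linvK. Qed.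

Lemma point_of_slack_line g h s a :
  Wbar A B g h -> point_of_slack (s + a *: h) = point_of_slack s + a *: g.
Proof.
move/point_of_slack_mx_Wbar=> Lh.
by rewrite /point_of_slack mulmxDr -scalemxAr Lh addrAC.
Qed.

Lemma Qproj_line g h s a : Wbar A B g h -> Qproj A B b d s ->
  Qproj A B b d (s + a *: h) <-> polyhedronP A B b d (point_of_slack s + a *: g).
Proof.
move=> Wgh Qs; rewrite -(point_of_slack_line s a Wgh); split.
  by move/QprojE; exact: Pbar_polyhedronP.
move=> /polyhedronP_Pbar Pbar_line; exists (point_of_slack (s + a *: h)).
suff slack_line : slack_of_point (point_of_slack (s + a *: h)) = s + a *: h.
  by move: Pbar_line; rewrite slack_line.
rewrite /slack_of_point (point_of_slack_line _ _ Wgh) mulmxDr -scalemxAr.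
have /QprojE/PbarP[_ <- _] := Qs; have /WbarP[_ ->] := Wgh.
by rewrite !mulNmx scalerN addrC addrACA subrr add0r.
Qed.

End SlackForm.

Theorem lemma7p1 (R : realFieldType) (n mA mB : nat)
  (A : 'M[R]_(mA, n)) (B : 'M[R]_(mB, n)) (b : 'cV[R]_mA) (d : 'cV[R]_mB)
  (hrk : \rank (col_mx A B) = n) :
  exists (L : 'M[R]_(n, mB)) (c : 'cV[R]_n),
    let psi := fun s : 'cV[R]_mB => L *m s + c in
    (* (1) psi : Q -> P is an invertible affine bijection with M (psi s, s) = q *)
    ((forall s, Qproj A B b d s ->
        Mmat A B *m col_mx (psi s) s = qvec b d /\ polyhedronP A B b d (psi s)) /\
     (forall s1 s2, Qproj A B b d s1 -> Qproj A B b d s2 -> psi s1 = psi s2 -> s1 = s2) /\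
     (forall x, polyhedronP A B b d x -> exists2 s, Qproj A B b d s & psi s = x) /\
     (exists (L' : 'M[R]_(mB, n)) (c' : 'cV[R]_mB),
        (forall s, Qproj A B b d s -> L' *m psi s + c' = s) /\
        (forall x, polyhedronP A B b d x ->
           Qproj A B b d (L' *m x + c') /\ psi (L' *m x + c') = x))) /\
    (* (2) characterization of elementary vectors *)
    (forall g : 'cV[R]_n,
       elementary A B g <->
       exists h : 'cV[R]_mB, Wbar A B g h /\ h <> 0 /\
         support_minimal (fun w => Wproj A B w /\ w <> 0) h) /\
    (* (3) augmentation steps correspond under psi *)
    (forall (g : 'cV[R]_n) (h : 'cV[R]_mB) (s : 'cV[R]_mB),
       Wbar A B g h -> h <> 0 ->
       support_minimal (fun w => Wproj A B w /\ w <> 0) h ->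
       Qproj A B b d s ->
       (forall s', is_aug (Qproj A B b d) s h s' ->
                   is_aug (polyhedronP A B b d) (psi s) g (psi s')) /\
       (forall x', is_aug (polyhedronP A B b d) (psi s) g x' ->
                   exists2 s', is_aug (Qproj A B b d) s h s' & psi s' = x')).
Proof.
exists (point_of_slack_mx A B), (AB_linv A B *m col_mx b d).
rewrite -/(point_of_slack A B b d); cbv zeta.
split; [split; [|split; [|split]] | split].
- move=> s /(QprojE _ _ hrk) Pbar_s.
  by split; [case: Pbar_s | exact: Pbar_polyhedronP Pbar_s].
- move=> s1 s2 Qs1 Qs2 eq_s12.
  by rewrite -(point_of_slackK hrk Qs1) -(point_of_slackK hrk Qs2) eq_s12.
- move=> x Px; exists (slack_of_point B d x); first exact: Qproj_slack_of_point.
  exact: slack_of_pointK.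
- exists (- B), d; split=> [s|x Px]; first exact: point_of_slackK.
  by split; [exact: Qproj_slack_of_point | exact: slack_of_pointK].
- exact: elementaryP.
- move=> g h s Wgh _ _ Qs; apply: is_aug_transfer => a.
    exact: Qproj_line.
  exact: point_of_slack_line.
Qed.
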